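(* Let $G=(V,E)$ be a finite connected graph, $G'=(V',E')$ a connected subgraph, $F\subset E$, $q\ge1$, $p\in(0,1)$, and $\lambda_1,\lambda_2\in\{1,q\}^E$ with $\lambda_1\le\lambda_2$. Then $$\mathbb P^{G'}\preceq\mathbb P^{G,E',\lambda_1},\qquad\mathbb P^{G,E',\lambda_1}\preceq\mathbb P^{G,E',\lambda_2},\qquad\mathbb P^{G,E\setminus F,\lambda_2}\preceq\mathbb P^{G/F}.$$ More generally, for $\lambda\in\{1,q\}^E$: if $E''\subset E'$ then $\mathbb P^{G',E'',\lambda_{E'}}\preceq\mathbb P^{G,E'',\lambda}$, and if $E''\subset E$ with $E''\cap F=\emptyset$ then $\mathbb P^{G,E'',\lambda}\preceq\mathbb P^{G/F,E'',\lambda_{E\setminus F}}$.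
   Context: For a finite connected (multi)graph $H$ with conductances $c$, $\Delta^H_c f(x)=\sum_{e=\{x,y\}}c_e(f(x)-f(y))$ acts on zero-sum functions on $\mathbf V(H)$; $\det\Delta^H_c$ is its determinant. For $\kappa$ and a set $E'$ of edges, $h(\kappa)$ and $s(\kappa)$ count the edges (in the domain of $\kappa$) with $\kappa_e=q$ resp. $\kappa_e=1$. $\mathbb P^{H}=\mathbb P^{H,p}$ is the measure on $\{1,q\}^{\mathbf E(H)}$ with $\mathbb P^H(\kappa)\propto p^{h(\kappa)}(1-p)^{s(\kappa)}(\det\Delta^H_\kappa)^{-1/2}$. For $E''\subset\mathbf E(H)$ and $\lambda\in\{1,q\}^{\mathbf E(H)}$, the measure with boundary condition is $\mathbb P^{H,E'',\lambda}(\kappa)\propto p^{h(\kappa)}(1-p)^{s(\kappa)}(\det\Delta^H_{(\lambda,\kappa)})^{-1/2}$ on $\kappa\in\{1,q\}^{E''}$, where $(\lambda,\kappa)$ equals $\kappa$ on $E''$ and $\lambda$ on $\mathbf E(H)\setminus E''$. $G/F$ is the multigraph obtained from $G$ by identifying the endpoints of each edge of $F$; its edges are identified with $E\setminus F$. $\mu_1\preceq\mu_2$ means $\mu_1(A)\le\mu_2(A)$ for every increasing event $A$ (coordinatewise order, $1<q$). *)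

From HB Require Import structures.
From mathcomp Require Import all_boot all_order all_algebra.
Set Implicit Arguments. Unset Strict Implicit. Unset Printing Implicit Defensive.
Import Order.TTheory GRing.Theory Num.Theory.
Local Open Scope ring_scope.

Section Defs.
Variable R : rcfType.

(* A finite multigraph H is given by a vertex set Ws : {set W}, an edge set
   Es : {set E} and an endpoint map ends : E -> W * W (loops allowed). *)

Definition adj (W E : finType) (Es : {set E}) (ends : E -> W * W) : rel W :=
  fun x y => [exists e in Es, (ends e == (x, y)) || (ends e == (y, x))].

Definition wf_mgraph (W E : finType) (Ws : {set W}) (Es : {set E})
    (ends : E -> W * W) : Prop :=
  forall e, e \in Es -> ((ends e).1 \in Ws) && ((ends e).2 \in Ws).

Definition connected_mgraph (W E : finType) (Ws : {set W}) (Es : {set E})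
    (ends : E -> W * W) : Prop :=
  Ws != set0 /\ {in Ws &, forall x y, connect (adj Es ends) x y}.

Definition laplacian (W E : finType) (Es : {set E}) (ends : E -> W * W)
    (c : E -> R) (f : W -> R) (x : W) : R :=
  \sum_(e in Es) c e *
     (((ends e).1 == x)%:R * (f x - f (ends e).2)
      + ((ends e).2 == x)%:R * (f x - f (ends e).1)).

(* det of Delta acting on zero-sum functions on Ws: writing
   enum Ws = w0 :: ws, the zero-sum functions have basis
   b_j = 1_{ws_j} - 1_{w0}, and a zero-sum g has coordinates g(ws_i);
   so the matrix of Delta in this basis is M i j = (Delta b_j)(ws_i). *)
Definition detLap (W E : finType) (Ws : {set W}) (Es : {set E})
    (ends : E -> W * W) (c : E -> R) : R :=
  match enum Ws with
  | [::] => 1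
  | w0 :: ws =>
      \det (\matrix_(i < size ws, j < size ws)
              laplacian Es ends c
                (fun x => (x == nth w0 ws j)%:R - (x == w0)%:R) (nth w0 ws i))
  end.

(* Configurations: kappa_e \in {1,q} is encoded by a boolean label
   (true <-> kappa_e = q, false <-> kappa_e = 1); the order 1 < q
   corresponds to false < true. *)
Definition cval (q : R) (b : bool) : R := if b then q else 1.

(* A configuration on a domain D \subset E is represented by the unique
   k : {ffun E -> bool} that is false outside D. *)
Definition canon (E : finType) (D : {set E}) (k : {ffun E -> bool}) : bool :=
  [forall e, (e \notin D) ==> ~~ k e].

Definition mix (E : finType) (D : {set E}) (lam k : {ffun E -> bool}) (q : R)
   : E -> R := fun e => cval q (if e \in D then k e else lam e).

Definition weight (W E : finType) (Ws : {set W}) (Es : {set E})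
    (ends : E -> W * W) (D : {set E}) (lam : {ffun E -> bool}) (q p : R)
    (k : {ffun E -> bool}) : R :=
  p ^+ #|[set e in D | k e]| * (1 - p) ^+ #|[set e in D | ~~ k e]|
  / Num.sqrt (detLap Ws Es ends (mix D lam k q)).

Definition Pbc (W E : finType) (Ws : {set W}) (Es : {set E})
    (ends : E -> W * W) (D : {set E}) (lam : {ffun E -> bool}) (q p : R)
    (A : {set {ffun E -> bool}}) : R :=
  (\sum_(k | canon D k && (k \in A)) weight Ws Es ends D lam q p k)
  / (\sum_(k | canon D k) weight Ws Es ends D lam q p k).

Definition Pfree (W E : finType) (Ws : {set W}) (Es : {set E})
    (ends : E -> W * W) (q p : R) (A : {set {ffun E -> bool}}) : R :=
  Pbc Ws Es ends Es [ffun => false] q p A.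

Definition increasing (E : finType) (A : {set {ffun E -> bool}}) : Prop :=
  forall k1 k2 : {ffun E -> bool},
    (forall e, k1 e ==> k2 e) -> k1 \in A -> k2 \in A.

Definition sdom (E : finType) (mu1 mu2 : {set {ffun E -> bool}} -> R) : Prop :=
  forall A, increasing A -> mu1 A <= mu2 A.

(* contraction G/F: vertices are the classes of the equivalence generated by
   the edges of F, edges E \ F, endpoints mapped to their classes. *)
Definition cls (V E : finType) (ends : E -> V * V) (F : {set E}) (x : V)
   : {set V} := [set y | connect (adj F ends) x y].

Definition contr_vertices (V E : finType) (ends : E -> V * V) (F : {set E})
   : {set {set V}} := [set cls ends F x | x : V].

Definition contr_ends (V E : finType) (ends : E -> V * V) (F : {set E})
   : E -> {set V} * {set V} :=
  fun e => (cls ends F (ends e).1, cls ends F (ends e).2).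

Definition simple_graph (V E : finType) (ends : E -> V * V) : Prop :=
  (forall e, (ends e).1 != (ends e).2) /\
  (forall e f, (ends e == ends f) || (ends e == ((ends f).2, (ends f).1)) ->
     e = f).

End Defs.

From HB Require Import structures.
From mathcomp Require Import all_boot all_order all_algebra.
From mathcomp Require Import ring lra.
Set Implicit Arguments. Unset Strict Implicit. Unset Printing Implicit Defensive.
Import Order.TTheory GRing.Theory Num.Theory.
Local Open Scope ring_scope.

(* Each measure has weight p^h (1-p)^s (det Delta)^(-1/2) on the lattice of
   configurations, so by Holley's inequality (a consequence of the
   Ahlswede-Daykin four functions theorem) it suffices to check the lattice
   condition w1(x) w2(y) <= w2(x \/ y) w1(x /\ y).  The Bernoulli factors are
   modular, and switching the edges of x \ y on one at a time reduces the
   determinant part to a single edge e: raising its conductance from 1 to q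
   multiplies det Delta by 1 + (q - 1) R_e, where R_e is the effective
   resistance of e.  By Thomson's principle R_e = max_f (2 grad_e f - energy f),
   and in each comparison (subgraph, larger boundary condition, contraction)
   every potential on the dominating network pulls back to the dominated one
   with the same gradient on e and no more energy, so R_e can only decrease. *)

Lemma det_add1_rank1 (R : comNzRingType) n (x : 'cV[R]_n) (y : 'rV[R]_n) :
  \det (1%:M + x *m y) = 1 + (y *m x) 0 0.
Proof.
pose L := block_mx (1%:M : 'M_n) 0 y (1%:M : 'M_1).
pose L' := block_mx (1%:M : 'M_n) 0 (- y) (1%:M : 'M_1).
pose X := block_mx (1%:M + x *m y) x 0 (1%:M : 'M_1).
have LXL' : L *m X *m L' = block_mx 1%:M x 0 (1%:M + y *m x).
  rewrite /L /X /L' !mulmx_block !mul1mx !mulmx1 !mul0mx !mulmx0 !add0r !addr0.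
  rewrite mulmxN addrK (addrC (y *m x)); congr block_mx.
  rewrite mulmxDr mulmx1 mulmxDl mul1mx mulmxA mulmxN.
  by rewrite addrACA addrN subrr addr0.
have := congr1 determinant LXL'.
rewrite !det_mulmx /L /L' /X det_ublock !det_lblock !det1 !mul1r !mulr1.
by move=> ->; rewrite det_ublock det1 mul1r det_mx11 !mxE.
Qed.

Section Laplacian.
Variables (R : rcfType) (W E : finType) (Ws : {set W}) (Es : {set E})
  (ends : E -> W * W).
Hypothesis wf : wf_mgraph Ws Es ends.

Definition grad e (f : W -> R) := f (ends e).1 - f (ends e).2.
Definition incidence e (x : W) : R :=
  ((ends e).1 == x)%:R - ((ends e).2 == x)%:R.
Definition energy (c : E -> R) (f : W -> R) :=
  \sum_(e in Es) c e * grad e f ^+ 2.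

Lemma laplacianE c f x :
  laplacian Es ends c f x = \sum_(e in Es) c e * (incidence e x * grad e f).
Proof.
apply: eq_bigr => e _; congr (_ * _); rewrite /incidence /grad.
case: eqP => [<-|_]; case: eqP => [h2|_] /=;
  rewrite ?mulr1n ?mulr0n ?mul1r ?mul0r ?add0r ?addr0 ?subr0 ?sub0r //.
- by rewrite h2 !subrr addr0 mul0r.
- by rewrite mul1r.
- by rewrite h2 mulN1r opprB.
- by rewrite oppr0 mul0r.
Qed.

Lemma sum_mul_eq (f : W -> R) a : a \in Ws ->
  \sum_(x in Ws) f x * (a == x)%:R = f a.
Proof.
move=> aW; rewrite (bigD1 a) //= eqxx mulr1 big1 ?addr0 // => x /andP[_ /negPf].
by rewrite eq_sym => ->; rewrite mulr0.
Qed.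

Lemma sum_eq1 a : a \in Ws -> \sum_(x in Ws) ((x == a)%:R : R) = 1.
Proof.
move=> aW; have := sum_mul_eq (fun=> 1) aW.
by under eq_bigr do rewrite mul1r eq_sym.
Qed.

Lemma sum_mul_incidence f e : e \in Es ->
  \sum_(x in Ws) f x * incidence e x = grad e f.
Proof.
move=> eE; have /andP[h1 h2] := wf eE.
rewrite /incidence; under eq_bigr do rewrite mulrBr.
by rewrite sumrB !sum_mul_eq.
Qed.

Lemma sum_mul_laplacian c f g : \sum_(x in Ws) f x * laplacian Es ends c g x =
  \sum_(e in Es) c e * (grad e f * grad e g).
Proof.
under eq_bigr do rewrite laplacianE big_distrr.
rewrite exchange_big /=; apply: eq_bigr => e eE.
transitivity (c e * grad e g * \sum_(x in Ws) f x * incidence e x).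
  by rewrite big_distrr; apply: eq_bigr => x _ /=; ring.
by rewrite sum_mul_incidence //; ring.
Qed.

Lemma sum_laplacian (c : E -> R) g : \sum_(x in Ws) laplacian Es ends c g x = 0.
Proof.
have := sum_mul_laplacian c (fun _ => 1) g; under eq_bigr do rewrite mul1r.
by move=> ->; apply: big1 => e _; rewrite /grad subrr !mul0r mulr0.
Qed.

Lemma energy_ge0 c f : (forall e, 0 <= c e) -> 0 <= energy c f.
Proof. by move=> hc; apply: sumr_ge0 => e _; rewrite mulr_ge0 ?sqr_ge0. Qed.

Lemma laplacian_bump (c c' : E -> R) e t f x : e \in Es -> c' e = c e + t ->
  (forall e', e' != e -> c' e' = c e') ->
  laplacian Es ends c' f x =
  laplacian Es ends c f x + t * (incidence e x * grad e f).
Proof.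
move=> eE hce hc'; rewrite !laplacianE (bigD1 e) //= [in RHS](bigD1 e) //= hce.
rewrite mulrDl -!addrA; congr (_ + _); rewrite addrC; congr (_ + _).
by apply: eq_bigr => e' /andP[_ ne]; rewrite hc'.
Qed.

Hypothesis conn : connected_mgraph Ws Es ends.

Lemma grad0_const (f : W -> R) : (forall e, e \in Es -> grad e f = 0) ->
  {in Ws &, forall x y, f x = f y}.
Proof.
move=> hd x y xW yW; case: conn => _ /(_ x y xW yW) cxy.
have cl : closed (adj Es ends) [pred z | f z == f x].
  move=> z z' /existsP[e /andP[eE /orP[] /eqP he]]; have := hd e eE;
  by rewrite /grad he /= => /eqP; rewrite subr_eq0 => /eqP h; rewrite !inE h.
by have := closed_connect cl cxy; rewrite !inE eqxx => /esym/eqP.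
Qed.

Lemma energy_eq0_const c f : (forall e, 0 < c e) -> energy c f = 0 ->
  {in Ws &, forall x y, f x = f y}.
Proof.
move=> hc hQ; apply: grad0_const => e eE.
have terms_ge0 e' : e' \in Es -> 0 <= c e' * grad e' f ^+ 2.
  by move=> _; rewrite mulr_ge0 ?sqr_ge0 ?ltW.
have /eqP := psumr_eq0P terms_ge0 hQ eE.
by rewrite mulf_eq0 (gt_eqF (hc e)) sqrf_eq0 => /eqP.
Qed.

Lemma const_sum0_eq0 (f : W -> R) : {in Ws &, forall x y, f x = f y} ->
  \sum_(x in Ws) f x = 0 -> {in Ws, forall x, f x = 0}.
Proof.
move=> cst; case: conn => /set0Pn[x0 x0W] _.
have -> : \sum_(x in Ws) f x = f x0 *+ #|Ws|.
  by rewrite -sumr_const; apply: eq_bigr => x xW; apply: cst.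
move/eqP; rewrite mulrn_eq0 cards_eq0 => /orP[/eqP Ws0|/eqP fx0 x xW].
  by move: x0W; rewrite Ws0 inE.
by rewrite (cst x x0).
Qed.

(* Thomson's principle: [grad e H] for the potential [H] of a unit current
   through [e] is the effective resistance, the maximum of
   [2 grad e f - energy c f]. *)
Lemma unit_potential_max c e H : (forall e, 0 <= c e) -> e \in Es ->
  {in Ws, forall x, laplacian Es ends c H x = incidence e x} ->
  grad e H = energy c H /\ forall f, 2 * grad e f - energy c f <= grad e H.
Proof.
move=> hc eE lapH.
have pairH f : \sum_(e' in Es) c e' * (grad e' f * grad e' H) = grad e f.
  rewrite -sum_mul_laplacian -(sum_mul_incidence f eE).
  by apply: eq_bigr => x xW; rewrite lapH.
have RH : grad e H = energy c H by rewrite -(pairH H).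
split=> // f; rewrite -{1}(pairH f) mulr_sumr -sumrB RH.
apply: ler_sum => e' _; rewrite -subr_ge0.
have -> : c e' * grad e' H ^+ 2 - (2 * (c e' * (grad e' f * grad e' H)) -
  c e' * grad e' f ^+ 2) = c e' * (grad e' f - grad e' H) ^+ 2 by ring.
by rewrite mulr_ge0 ?sqr_ge0.
Qed.

Section ZeroSumCoordinates.
Variables (w0 : W) (ws : seq W).
Hypothesis enumWs : enum Ws = w0 :: ws.
Local Notation n := (size ws).

Definition zbasis (j : 'I_n) (x : W) : R :=
  (x == nth w0 ws j)%:R - (x == w0)%:R.
Definition lapmx (c : E -> R) : 'M[R]_n :=
  \matrix_(i, j) laplacian Es ends c (zbasis j) (nth w0 ws i).
Definition zfun (g : 'cV[R]_n) (x : W) : R := \sum_j g j 0 * zbasis j x.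

Lemma detLap_lapmx c : detLap Ws Es ends c = \det (lapmx c).
Proof. by rewrite /detLap enumWs. Qed.

Lemma mem_Ws x : (x \in Ws) = (x \in w0 :: ws).
Proof. by rewrite -enumWs mem_enum. Qed.

Lemma w0_in_Ws : w0 \in Ws.
Proof. by rewrite mem_Ws inE eqxx. Qed.

Lemma nth_in_Ws (i : 'I_n) : nth w0 ws i \in Ws.
Proof. by rewrite mem_Ws inE mem_nth ?orbT. Qed.

Lemma nth_ws_eq (i j : 'I_n) :
  (nth w0 ws i == nth w0 ws j) = (i == j) /\ (nth w0 ws i == w0) = false.
Proof.
have /andP[w0ws uws] : uniq (w0 :: ws) by rewrite -enumWs enum_uniq.
split; first by rewrite nth_uniq.
by apply/negP => /eqP wi; move: w0ws; rewrite -wi mem_nth.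
Qed.

Lemma zbasisE (i j : 'I_n) : zbasis j (nth w0 ws i) = (i == j)%:R.
Proof. by rewrite /zbasis !(nth_ws_eq i j).1 (nth_ws_eq i j).2 subr0. Qed.

Lemma zfunE g (i : 'I_n) : zfun g (nth w0 ws i) = g i 0.
Proof.
rewrite /zfun (bigD1 i) //= zbasisE eqxx mulr1 big1 ?addr0 // => j /negPf.
by rewrite zbasisE eq_sym => ->; rewrite mulr0.
Qed.

Lemma sum_zfun g : \sum_(x in Ws) zfun g x = 0.
Proof.
rewrite /zfun exchange_big /=; apply: big1 => j _; rewrite -big_distrr /=.
by rewrite /zbasis sumrB !sum_eq1 ?nth_in_Ws ?w0_in_Ws // subrr mulr0.
Qed.

Lemma grad_zfun e g : grad e (zfun g) = \sum_j g j 0 * grad e (zbasis j).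
Proof. by rewrite /grad /zfun -sumrB; apply: eq_bigr => j _; rewrite -mulrBr. Qed.

Lemma laplacian_zfun c g x :
  laplacian Es ends c (zfun g) x = \sum_j g j 0 * laplacian Es ends c (zbasis j) x.
Proof.
rewrite laplacianE; under eq_bigr do rewrite grad_zfun !big_distrr.
rewrite exchange_big /=; apply: eq_bigr => j _.
rewrite laplacianE big_distrr; apply: eq_bigr => e _ /=; ring.
Qed.

Lemma lapmx_mulE c g (i : 'I_n) :
  (lapmx c *m g) i 0 = laplacian Es ends c (zfun g) (nth w0 ws i).
Proof. by rewrite mxE laplacian_zfun; apply: eq_bigr => j _; rewrite mxE mulrC. Qed.

Lemma eq_in_sum_nth (phi psi : W -> R) :
  \sum_(x in Ws) phi x = \sum_(x in Ws) psi x ->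
  (forall i : 'I_n, phi (nth w0 ws i) = psi (nth w0 ws i)) ->
  {in Ws, forall x, phi x = psi x}.
Proof.
have sumWs (F : W -> R) : \sum_(x in Ws) F x = F w0 + \sum_(i < n) F (nth w0 ws i).
  by rewrite -big_enum enumWs big_cons (big_nth w0) big_mkord.
move=> hs hi x; rewrite !sumWs (eq_bigr _ (fun i _ => hi i)) in hs.
move/addIr: hs => h0; rewrite mem_Ws inE => /orP[/eqP -> //|xws].
have ix : (index x ws < n)%N by rewrite index_mem.
by have := hi (Ordinal ix); rewrite /= nth_index.
Qed.

(* A kernel vector gives a zero-sum f with (1 - s) |f|^2 + s energy f = 0; for
   s = 1 zero energy makes f constant on the connected graph, hence zero. *)
Lemma homotopy_lapmx_inj c s (g : 'cV[R]_n) : (forall e, 0 < c e) -> 0 <= s <= 1 ->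
  ((1 - s) *: 1%:M + s *: lapmx c) *m g = 0 -> g = 0.
Proof.
move=> hc /andP[s0 s1] Hg; set f := zfun g.
have f_eq : {in Ws, forall x, (1 - s) * f x + s * laplacian Es ends c f x = 0}.
  apply: (eq_in_sum_nth (psi := fun=> 0)) => [|i].
    by rewrite big_split /= -!big_distrr /= sum_zfun sum_laplacian !mulr0 addr0 big1.
  have := congr1 (fun m : 'cV[R]_n => m i 0) Hg.
  rewrite mulmxDl -!scalemxAl mul1mx /=.
  have -> : ((1 - s) *: g + s *: (lapmx c *m g)) i 0 =
            (1 - s) * g i 0 + s * (lapmx c *m g) i 0 by rewrite !mxE.
  by rewrite lapmx_mulE /f zfunE mxE.
have energy_eq : (1 - s) * \sum_(x in Ws) f x ^+ 2 + s * energy c f = 0.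
  transitivity (\sum_(x in Ws) f x * ((1 - s) * f x + s * laplacian Es ends c f x)).
    rewrite /energy -sum_mul_laplacian !big_distrr -big_split /=.
    by apply: eq_bigr => x _; ring.
  by apply: big1 => x xW; rewrite f_eq // mulr0.
have sq_ge0 x : x \in Ws -> 0 <= f x ^+ 2 by move=> _; apply: sqr_ge0.
have f0 : {in Ws, forall x, f x = 0}.
  have hQ := energy_ge0 f (fun e => ltW (hc e)).
  have hS : 0 <= \sum_(x in Ws) f x ^+ 2 by apply: sumr_ge0.
  have [s_lt1|s_ge1] := ltP s 1.
    have S0 : \sum_(x in Ws) f x ^+ 2 = 0 by nra.
    by move=> x xW; apply/eqP; rewrite -sqrf_eq0; apply/eqP/(psumr_eq0P sq_ge0).
  have Q0 : energy c f = 0 by nra.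
  exact: const_sum0_eq0 (energy_eq0_const hc Q0) (sum_zfun g).
apply/matrixP => i j; rewrite (ord1 j) !mxE -zfunE; exact: f0 (nth_in_Ws i).
Qed.

(* The straight path from the identity to lapmx c avoids singular matrices,
   and its determinant is a polynomial, so by the intermediate value theorem
   the determinant keeps the sign it has at the identity. *)
Lemma det_lapmx_gt0 c : (forall e, 0 < c e) -> 0 < \det (lapmx c).
Proof.
move=> hc; pose A : 'M[{poly R}]_n :=
  \matrix_(i, j) ((1 - 'X) * ((i == j)%:R)%:P + 'X * (lapmx c i j)%:P).
have hA s : (\det A).[s] = \det ((1 - s) *: 1%:M + s *: lapmx c).
  rewrite -horner_evalE -det_map_mx; congr (\det _); apply/matrixP => i j.
  by rewrite !mxE -[LHS]/(horner_eval s _) horner_evalE !hornerE.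
have h0 : (\det A).[0] = 1 by rewrite hA subr0 scale1r scale0r addr0 det1.
have h1 : (\det A).[1] = \det (lapmx c) by rewrite hA subrr scale0r add0r scale1r.
rewrite ltNge; apply/negP => hle.
have [x x01 rx] : exists2 x, 0 <= x <= 1 & root (- \det A) x.
  by apply: poly_ivt => //; rewrite !hornerN h0 h1 oppr_le0 ler01 oppr_ge0.
move: rx; rewrite /root hornerN oppr_eq0 hA; apply/negP.
rewrite -det_tr; apply/det0P => -[v vn0 hv]; move: vn0.
have hvT : ((1 - x) *: 1%:M + x *: lapmx c) *m v^T = 0.
  by apply: trmx_inj; rewrite trmx_mul trmxK hv trmx0.
by rewrite -[v]trmxK (homotopy_lapmx_inj hc x01 hvT) trmx0 eqxx.
Qed.

(* Raising the conductance of [e] by [t] is a rank-one perturbation of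
   [lapmx c]; the matrix determinant lemma gives the factor. *)
Lemma det_lapmx_bump c c' e t : (forall e, 0 < c e) ->
  e \in Es -> c' e = c e + t -> (forall e', e' != e -> c' e' = c e') ->
  exists2 H : W -> R,
    \det (lapmx c') = \det (lapmx c) * (1 + t * grad e H) &
    {in Ws, forall x, laplacian Es ends c H x = incidence e x}.
Proof.
move=> hc eE hce hc'.
pose u : 'cV[R]_n := \col_i incidence e (nth w0 ws i).
pose v : 'rV[R]_n := \row_j grad e (zbasis j).
have hM : lapmx c' = lapmx c + t *: (u *m v).
  apply/matrixP => i j; rewrite !mxE (laplacian_bump _ _ eE hce hc') big_ord1.
  by rewrite !mxE.
have unitM : lapmx c \in unitmx by rewrite unitmxE unitfE gt_eqF ?det_lapmx_gt0.
pose h := invmx (lapmx c) *m u.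
have Mh : lapmx c *m h = u by rewrite /h mulKVmx.
exists (zfun h).
  have vh : (v *m h) 0 0 = grad e (zfun h).
    by rewrite grad_zfun mxE; apply: eq_bigr => j _; rewrite !mxE mulrC.
  have -> : lapmx c' = lapmx c *m (1%:M + (t *: h) *m v).
    by rewrite hM mulmxDr mulmx1 -scalemxAl -scalemxAr mulmxA Mh.
  by rewrite det_mulmx det_add1_rank1 -scalemxAr mxE vh.
apply: eq_in_sum_nth => [|i]; last by rewrite -lapmx_mulE Mh mxE.
rewrite sum_laplacian; have := sum_mul_incidence (fun=> 1) eE.
by under eq_bigr do rewrite mul1r; move=> ->; rewrite /grad subrr.
Qed.

End ZeroSumCoordinates.

Lemma detLap_gt0 (c : E -> R) : (forall e, 0 < c e) -> 0 < detLap Ws Es ends c.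
Proof.
move=> hc; case enumWs: (enum Ws) => [|w0 ws]; first by rewrite /detLap enumWs.
by rewrite (detLap_lapmx enumWs) (det_lapmx_gt0 enumWs).
Qed.

Lemma detLap_bump (c c' : E -> R) e t : (forall e, 0 < c e) ->
  e \in Es -> c' e = c e + t -> (forall e', e' != e -> c' e' = c e') ->
  exists H : W -> R,
    [/\ detLap Ws Es ends c' = detLap Ws Es ends c * (1 + t * grad e H),
        grad e H = energy c H &
        forall f, 2 * grad e f - energy c f <= grad e H].
Proof.
move=> hc eE hce hc'; case enumWs: (enum Ws) => [|w0 ws].
  by have /andP[] := wf eE; rewrite -mem_enum enumWs.
have [H detH lapH] := det_lapmx_bump enumWs hc eE hce hc'.
have [RH thomson] := unit_potential_max (fun e => ltW (hc e)) eE lapH.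
by exists H; rewrite !(detLap_lapmx enumWs).
Qed.

End Laplacian.

Section AhlswedeDaykin.
Variables (R : realFieldType) (E : finType).
Implicit Types (k x y : {ffun E -> bool}).

Lemma four_numbers (a0 a1 b0 b1 c0 c1 d0 d1 : R) :
  0 <= a0 -> 0 <= a1 -> 0 <= b0 -> 0 <= b1 -> 0 <= c0 -> 0 <= c1 ->
  0 <= d0 -> 0 <= d1 ->
  a0 * b0 <= c0 * d0 -> a0 * b1 <= c1 * d0 -> a1 * b0 <= c1 * d0 ->
  a1 * b1 <= c1 * d1 ->
  (a0 + a1) * (b0 + b1) <= (c0 + c1) * (d0 + d1).
Proof.
move=> ha0 ha1 hb0 hb1 hc0 hc1 hd0 hd1 h00 h01 h10 h11.
have [M0|Mneq0] := eqVneq (c1 * d0) 0.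
  have e1 : a0 * b1 = 0 by apply/eqP; rewrite eq_le mulr_ge0 // andbT -M0.
  have e2 : a1 * b0 = 0 by apply/eqP; rewrite eq_le mulr_ge0 // andbT -M0.
  have : 0 <= c0 * d1 by apply: mulr_ge0.
  nra.
have M0 : 0 < c1 * d0 by rewrite lt_def Mneq0 mulr_ge0.
have cross : (a0 * b1) * (a1 * b0) <= (c0 * d1) * (c1 * d0).
  have -> : (c0 * d1) * (c1 * d0) = (c0 * d0) * (c1 * d1) by ring.
  have -> : (a0 * b1) * (a1 * b0) = (a0 * b0) * (a1 * b1) by ring.
  by apply: ler_pM => //; apply: mulr_ge0.
have : 0 <= (c1 * d0 - a0 * b1) * (c1 * d0 - a1 * b0).
  by apply: mulr_ge0; rewrite subr_ge0.
have : a0 * b1 + a1 * b0 <= c1 * d0 + c0 * d1.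
  by rewrite -(ler_pM2r M0); nra.
nra.
Qed.

Definition kjoin x y : {ffun E -> bool} := [ffun e => x e || y e].
Definition kmeet x y : {ffun E -> bool} := [ffun e => x e && y e].
Definition kset (e : E) x : {ffun E -> bool} := [ffun e' => (e' == e) || x e'].
Definition kunset (e : E) x : {ffun E -> bool} := [ffun e' => (e' != e) && x e'].

Lemma kjoin_ksetl e x y : kjoin (kset e x) y = kset e (kjoin x y).
Proof. by apply/ffunP => e'; rewrite !ffunE orbA. Qed.

Lemma kjoin_ksetr e x y : kjoin x (kset e y) = kset e (kjoin x y).
Proof. by apply/ffunP => e'; rewrite !ffunE orbCA orbA. Qed.

Lemma kjoin_kset e x y : kjoin (kset e x) (kset e y) = kset e (kjoin x y).
Proof. by apply/ffunP => e'; rewrite !ffunE; case: eqP. Qed.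

Lemma kmeet_kset e x y : kmeet (kset e x) (kset e y) = kset e (kmeet x y).
Proof. by apply/ffunP => e'; rewrite !ffunE; case: eqP. Qed.

Lemma kmeet_ksetl e x y : y e = false -> kmeet (kset e x) y = kmeet x y.
Proof.
by move=> ye; apply/ffunP => e'; rewrite !ffunE; case: eqP => [->|]; rewrite ?ye ?andbF.
Qed.

Lemma kmeet_ksetr e x y : x e = false -> kmeet x (kset e y) = kmeet x y.
Proof.
by move=> xe; apply/ffunP => e'; rewrite !ffunE; case: eqP => [->|]; rewrite ?xe.
Qed.

Lemma canonP (D : {set E}) k :
  reflect (forall e, e \notin D -> k e = false) (canon D k).
Proof.
apply: (iffP forallP) => [h e eD|h e]; first by have := h e; rewrite eD => /negPf.
by apply/implyP => /h ->.
Qed.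

Lemma canonD1 (D : {set E}) e k : canon (D :\ e) k -> canon D k.
Proof.
by move/canonP => hk; apply/canonP => e' e'D; apply: hk; rewrite !inE (negbTE e'D) andbF.
Qed.

Lemma canon_kset (D : {set E}) e k : e \in D -> canon (D :\ e) k -> canon D (kset e k).
Proof.
move=> eD /canonP hk; apply/canonP => e' e'D; rewrite !ffunE hk ?orbF.
  by apply/eqP => ee; move: e'D; rewrite ee eD.
by rewrite !inE (negbTE e'D) andbF.
Qed.

Lemma sum_canonD1 (D : {set E}) e (F : {ffun E -> bool} -> R) : e \in D ->
  \sum_(k | canon D k) F k = \sum_(k | canon (D :\ e) k) (F k + F (kset e k)).
Proof.
move=> eD; rewrite big_split /= (bigID (fun k => k e)) /= addrC; congr (_ + _).
  apply: eq_bigl => k; apply/andP/idP => [[/canonP h /negPf ke] | ck].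
    by apply/canonP => e'; rewrite !inE negb_and negbK => /orP[/eqP -> // | /h].
  by split; [exact: canonD1 ck | move/canonP: ck => ->; rewrite ?inE ?eqxx].
rewrite (reindex_onto (kset e) (kunset e)) /=; last first.
  move=> k /andP[_ ke]; apply/ffunP => e'; rewrite !ffunE.
  by case: eqP => [->|ne] //=; rewrite ke.
apply: eq_bigl => k; apply/idP/idP.
  move=> /andP[/andP[/canonP h _] /eqP hd]; apply/canonP => e' e'D.
  rewrite -hd ffunE; case: eqP => //= ne; apply: h.
  by move: e'D; rewrite !inE negb_and negbK => /orP[/eqP|].
move=> ck; rewrite canon_kset // !ffunE eqxx /=.
apply/eqP/ffunP => e'; rewrite !ffunE; case: eqP => [->|//].
by move/canonP: ck => ->; rewrite ?inE ?eqxx.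
Qed.

Lemma sum_canon0 (F : {ffun E -> bool} -> R) :
  \sum_(k | canon set0 k) F k = F [ffun => false].
Proof.
apply: big_pred1 => k /=; apply/canonP/eqP => [h|->].
  by apply/ffunP => e; rewrite ffunE h // inE.
by move=> e _; rewrite ffunE.
Qed.

(* Induction on [#|D|]: summing out one coordinate is [four_numbers]. *)
Theorem four_functions (D : {set E}) (a b g d : {ffun E -> bool} -> R) :
  (forall k, 0 <= a k) -> (forall k, 0 <= b k) ->
  (forall k, 0 <= g k) -> (forall k, 0 <= d k) ->
  (forall x y, canon D x -> canon D y ->
     a x * b y <= g (kjoin x y) * d (kmeet x y)) ->
  (\sum_(k | canon D k) a k) * (\sum_(k | canon D k) b k) <=
  (\sum_(k | canon D k) g k) * (\sum_(k | canon D k) d k).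
Proof.
move: {2}#|D| (erefl #|D|) => n; elim: n D a b g d => [|n IH] D a b g d.
  move/eqP; rewrite cards_eq0 => /eqP -> ha hb hg hd h.
  rewrite !sum_canon0; have := h [ffun => false] [ffun => false].
  have -> : kjoin [ffun => false] [ffun => false] = [ffun => false].
    by apply/ffunP => e; rewrite !ffunE.
  have -> : kmeet [ffun => false] [ffun => false] = [ffun => false].
    by apply/ffunP => e; rewrite !ffunE.
  by apply; apply/canonP => e _; rewrite ffunE.
move=> cardD ha hb hg hd h.
have [e eD] : exists e, e \in D by apply/set0Pn; rewrite -cards_eq0 cardD.
have cardD1 : #|D :\ e| = n by rewrite (cardsD1 e D) eD add1n in cardD; case: cardD.
rewrite !(sum_canonD1 _ eD).
apply: (IH _ (fun k => a k + a (kset e k)) (fun k => b k + b (kset e k))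
  (fun k => g k + g (kset e k)) (fun k => d k + d (kset e k)) cardD1)
  => [k|k|k|k|x y cx cy]; try by apply: addr_ge0.
have xe : x e = false by move/canonP: cx; apply; rewrite !inE eqxx.
have ye : y e = false by move/canonP: cy; apply; rewrite !inE eqxx.
apply: four_numbers => //.
- exact: h (canonD1 cx) (canonD1 cy).
- by rewrite -kjoin_ksetr -(kmeet_ksetr _ xe); apply: h (canonD1 cx) (canon_kset eD cy).
- by rewrite -kjoin_ksetl -(kmeet_ksetl _ ye); apply: h (canon_kset eD cx) (canonD1 cy).
- by rewrite -kjoin_kset -kmeet_kset; apply: h (canon_kset eD cx) (canon_kset eD cy).
Qed.

(* Holley's inequality, from [four_functions] applied to the restrictions of
   the weights to [A] and to its complement. *)
Lemma holley (D : {set E}) (w1 w2 : {ffun E -> bool} -> R) A :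
  (forall k, 0 <= w1 k) -> (forall k, 0 <= w2 k) ->
  (forall x y, canon D x -> canon D y ->
     w1 x * w2 y <= w2 (kjoin x y) * w1 (kmeet x y)) ->
  increasing A ->
  (\sum_(k | canon D k && (k \in A)) w1 k) * (\sum_(k | canon D k) w2 k) <=
  (\sum_(k | canon D k && (k \in A)) w2 k) * (\sum_(k | canon D k) w1 k).
Proof.
move=> h1 h2 hw incA.
have joinA x y : x \in A -> kjoin x y \in A.
  by apply: incA => e; rewrite !ffunE; apply/implyP => ->.
have meetA x y : y \notin A -> kmeet x y \notin A.
  by apply: contra; apply: incA => e; rewrite !ffunE; apply/implyP => /andP[].
have := @four_functions D (fun k => if k \in A then w1 k else 0)
  (fun k => if k \in A then 0 else w2 k) (fun k => if k \in A then w2 k else 0)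
  (fun k => if k \in A then 0 else w1 k).
have sum_out (w : {ffun E -> bool} -> R) :
    \sum_(k | canon D k) (if k \in A then 0 else w k) =
    \sum_(k | canon D k && (k \notin A)) w k.
  by rewrite big_mkcondr /=; apply: eq_bigr => k _; case: (k \in A).
rewrite -!big_mkcondr /= !sum_out !(bigID (fun k => k \in A) (fun k => canon D k)) /=.
move=> AD.
have : (\sum_(k | canon D k && (k \in A)) w1 k) *
       (\sum_(k | canon D k && (k \notin A)) w2 k) <=
       (\sum_(k | canon D k && (k \in A)) w2 k) *
       (\sum_(k | canon D k && (k \notin A)) w1 k).
  apply: AD => [k|k|k|k|x y cx cy]; try by case: ifP.
  case: ifP => xA; last first.
    by rewrite mul0r; case: ifP => _; rewrite mulr_ge0 //; case: ifP.
  case: ifP => yA; first by rewrite mulr0 mulr_ge0 //; case: ifP.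
  by rewrite joinA // (negbTE (meetA x y (negbT yA))); apply: hw.
nra.
Qed.

End AhlswedeDaykin.

Section BernoulliWeight.
Variables (R : rcfType) (E : finType) (D : {set E}) (p : R).
Hypotheses (hp0 : 0 < p) (hp1 : p < 1).

Definition bernoulli_weight (k : {ffun E -> bool}) : R :=
  p ^+ #|[set e in D | k e]| * (1 - p) ^+ #|[set e in D | ~~ k e]|.

Lemma bernoulli_weight_gt0 k : 0 < bernoulli_weight k.
Proof. by rewrite mulr_gt0 // exprn_gt0 ?subr_gt0. Qed.

Lemma bernoulli_weightM x y :
  bernoulli_weight x * bernoulli_weight y =
  bernoulli_weight (kjoin x y) * bernoulli_weight (kmeet x y).
Proof.
rewrite /bernoulli_weight.
set X := [set e in D | x e]; set Y := [set e in D | y e].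
set X' := [set e in D | ~~ x e]; set Y' := [set e in D | ~~ y e].
have -> : [set e in D | kjoin x y e] = X :|: Y.
  by apply/setP => e; rewrite !inE ffunE; case: (e \in D).
have -> : [set e in D | kmeet x y e] = X :&: Y.
  by apply/setP => e; rewrite !inE ffunE; case: (e \in D).
have -> : [set e in D | ~~ kjoin x y e] = X' :&: Y'.
  by apply/setP => e; rewrite !inE ffunE negb_or; case: (e \in D).
have -> : [set e in D | ~~ kmeet x y e] = X' :|: Y'.
  by apply/setP => e; rewrite !inE ffunE negb_and; case: (e \in D).
have e1 : p ^+ #|X| * p ^+ #|Y| = p ^+ #|X :|: Y| * p ^+ #|X :&: Y|.
  by rewrite -!exprD cardsUI.
have e2 : (1 - p) ^+ #|X'| * (1 - p) ^+ #|Y'| =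
          (1 - p) ^+ #|X' :&: Y'| * (1 - p) ^+ #|X' :|: Y'|.
  by rewrite -!exprD (addnC #|X' :&: Y'|) cardsUI.
by rewrite mulrACA e1 e2; ring.
Qed.

Lemma weightE (W : finType) (Ws : {set W}) Es ends lam q k :
  weight Ws Es ends D lam q p k =
  bernoulli_weight k / Num.sqrt (detLap Ws Es ends (mix D lam k q)).
Proof. by []. Qed.

Lemma weight_ge0 (W : finType) (Ws : {set W}) Es ends lam q k :
  0 <= weight Ws Es ends D lam q p k.
Proof. by rewrite weightE divr_ge0 ?sqrtr_ge0 ?ltW ?bernoulli_weight_gt0. Qed.

End BernoulliWeight.

Lemma mix_gt0 (R : rcfType) (E : finType) (D : {set E}) lam k (q : R) :
  1 <= q -> forall e, 0 < mix D lam k q e.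
Proof.
move=> hq e; rewrite /mix /cval; case: (if e \in D then k e else lam e) => //.
exact: lt_le_trans hq.
Qed.

Section EnergyComparison.
Variables (R : rcfType) (E W1 W2 : finType).
Variables (Ws1 : {set W1}) (Es1 : {set E}) (ends1 : E -> W1 * W1).
Variables (Ws2 : {set W2}) (Es2 : {set E}) (ends2 : E -> W2 * W2).
Variables (D : {set E}) (lam1 lam2 : {ffun E -> bool}) (q p : R).
Hypotheses (wf1 : wf_mgraph Ws1 Es1 ends1) (conn1 : connected_mgraph Ws1 Es1 ends1).
Hypotheses (wf2 : wf_mgraph Ws2 Es2 ends2) (conn2 : connected_mgraph Ws2 Es2 ends2).
Hypotheses (D1 : D \subset Es1) (D2 : D \subset Es2).
Hypotheses (hq : 1 <= q) (hp0 : 0 < p) (hp1 : p < 1).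

Hypothesis energy_pullback : forall k1 k2 : {ffun E -> bool},
  (forall e, k1 e ==> k2 e) -> forall f : W2 -> R, exists2 g : W1 -> R,
    {in D, forall e, grad ends1 e g = grad ends2 e f} &
    energy Es1 ends1 (mix D lam1 k1 q) g <= energy Es2 ends2 (mix D lam2 k2 q) f.

Local Notation det1 k := (detLap Ws1 Es1 ends1 (mix D lam1 k q)).
Local Notation det2 k := (detLap Ws2 Es2 ends2 (mix D lam2 k q)).

Let det1_gt0 (k : {ffun E -> bool}) : 0 < det1 k.
Proof. exact: (detLap_gt0 wf1 conn1 (mix_gt0 D lam1 k hq) : 0 < _). Qed.
Let det2_gt0 (k : {ffun E -> bool}) : 0 < det2 k.
Proof. exact: (detLap_gt0 wf2 conn2 (mix_gt0 D lam2 k hq) : 0 < _). Qed.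

Lemma mix_kset lam (k : {ffun E -> bool}) e : e \in D -> k e = false ->
  mix D lam (kset e k) q e = mix D lam k q e + (q - 1).
Proof. by move=> eD ke; rewrite /mix eD ffunE eqxx ke /cval; ring. Qed.

Lemma mix_kset_neq lam (k : {ffun E -> bool}) e e' :
  e' != e -> mix D lam (kset e k) q e' = mix D lam k q e'.
Proof. by move=> ne; rewrite /mix ffunE (negbTE ne). Qed.

(* Switching [e] on multiplies each determinant by [1 + (q - 1) R_e], and the
   effective resistance [R_e] of the first network dominates the second by
   Thomson's principle and [energy_pullback]. *)
Lemma det_ratio_kset (k1 k2 : {ffun E -> bool}) e :
  (forall e, k1 e ==> k2 e) -> e \in D -> k2 e = false ->
  det2 (kset e k2) * det1 k1 <= det1 (kset e k1) * det2 k2.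
Proof.
move=> le12 eD k2e.
have k1e : k1 e = false by move: (le12 e); rewrite k2e implybF => /negPf.
have [H1 [det1H _ thomson1]] := detLap_bump wf1 conn1
  (mix_gt0 D lam1 k1 hq) (subsetP D1 e eD)
  (mix_kset lam1 eD k1e) (@mix_kset_neq lam1 k1 e).
have [H2 [det2H RH2 _]] := detLap_bump wf2 conn2
  (mix_gt0 D lam2 k2 hq) (subsetP D2 e eD)
  (mix_kset lam2 eD k2e) (@mix_kset_neq lam2 k2 e).
have [g gradg energyg] := energy_pullback le12 H2.
have R21 : grad ends2 e H2 <= grad ends1 e H1.
  by apply: le_trans (thomson1 g); rewrite gradg //; lra.
rewrite det1H det2H; have := det1_gt0 k1; have := det2_gt0 k2.
set A := det1 k1; set B := det2 k2; set r1 := grad _ e H1; set r2 := grad _ e H2.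
move=> B0 A0; have -> : B * (1 + (q - 1) * r2) * A = A * (1 + (q - 1) * r2) * B.
  by ring.
by rewrite ler_pM2r // ler_pM2l // lerD2l ler_wpM2l // subr_ge0.
Qed.

Definition kadd (k : {ffun E -> bool}) (a : {set E}) : {ffun E -> bool} :=
  [ffun e => k e || (e \in a)].

Lemma det_ratio_kadd n (a : {set E}) (k1 k2 : {ffun E -> bool}) :
  #|a| = n -> a \subset D ->
  (forall e, k1 e ==> k2 e) -> {in a, forall e, k2 e = false} ->
  det2 (kadd k2 a) * det1 k1 <= det1 (kadd k1 a) * det2 k2.
Proof.
elim: n a => [|n IH] a.
  move/eqP; rewrite cards_eq0 => /eqP -> _ _ _.
  have kadd0 k : kadd k set0 = k by apply/ffunP => e; rewrite ffunE inE orbF.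
  by rewrite !kadd0 mulrC.
move=> carda aD le12 k2a.
have [e ea] : exists e, e \in a by apply/set0Pn; rewrite -cards_eq0 carda.
have carda1 : #|a :\ e| = n by rewrite (cardsD1 e a) ea add1n in carda; case: carda.
have kaddD1 k : kadd k a = kset e (kadd k (a :\ e)).
  apply/ffunP => e'; rewrite !ffunE !inE.
  by case: eqP => [->|ne] /=; rewrite ?ea ?orbT.
have le12' e' : kadd k1 (a :\ e) e' ==> kadd k2 (a :\ e) e'.
  rewrite !ffunE; apply/implyP => /orP[h|->]; last by rewrite orbT.
  by move: (le12 e'); rewrite h /= => ->.
have k2e : kadd k2 (a :\ e) e = false by rewrite ffunE !inE eqxx /= k2a.
have step := det_ratio_kset le12' (subsetP aD e ea) k2e.
have ind := IH _ carda1 (subset_trans (subsetDl a _) aD) le12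
  (fun e' h => k2a e' (subsetP (subsetDl a [set e]) e' h)).
have := det2_gt0 (kset e (kadd k2 (a :\ e))); have := det1_gt0 k1.
have := det1_gt0 (kadd k1 (a :\ e)); have := det2_gt0 (kadd k2 (a :\ e)).
move: step ind; rewrite !kaddD1.
set A := det2 (kset e _); set B := det1 (kadd k1 _).
set C := det1 (kset e _); set X := det2 (kadd k2 _).
move=> step ind X0 B0 d0 A0; rewrite -(ler_pM2r (mulr_gt0 B0 X0)).
have -> : A * det1 k1 * (B * X) = (A * B) * (X * det1 k1) by ring.
have -> : C * det2 k2 * (B * X) = (C * X) * (B * det2 k2) by ring.
by apply: ler_pM => //; rewrite mulr_ge0 ?ltW.
Qed.

(* The lattice condition of Holley's inequality: the Bernoulli factors are
   modular and the determinants satisfy [det_ratio_kadd] with [a = x \ y]. *)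
Lemma weight_lattice (x y : {ffun E -> bool}) : canon D x -> canon D y ->
  weight Ws1 Es1 ends1 D lam1 q p x * weight Ws2 Es2 ends2 D lam2 q p y <=
  weight Ws2 Es2 ends2 D lam2 q p (kjoin x y) *
  weight Ws1 Es1 ends1 D lam1 q p (kmeet x y).
Proof.
move=> cx cy; pose a := [set e | x e && ~~ y e].
have aD : a \subset D.
  apply/subsetP => e; rewrite inE => /andP[xe _]; apply: contraT => eD.
  by move/canonP: cx => /(_ e eD); rewrite xe.
have le e : kmeet x y e ==> y e by rewrite ffunE; apply/implyP => /andP[].
have ya : {in a, forall e, y e = false} by move=> e; rewrite inE => /andP[_ /negPf].
have := det_ratio_kadd (erefl #|a|) aD le ya.
have -> : kadd (kmeet x y) a = x.
  by apply/ffunP => e; rewrite !ffunE inE; case: (x e); case: (y e).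
have -> : kadd y a = kjoin x y.
  by apply/ffunP => e; rewrite !ffunE inE; case: (x e); case: (y e).
move=> hdet; have bw_gt0 := bernoulli_weight_gt0 D hp0 hp1.
rewrite !weightE !mulf_div -bernoulli_weightM.
rewrite (ler_pM2l (mulr_gt0 (bw_gt0 x) (bw_gt0 y))).
have [dx dy] := (det1_gt0 x, det2_gt0 y).
have [dj dm] := (det2_gt0 (kjoin x y), det1_gt0 (kmeet x y)).
rewrite -sqrtrM ?(ltW dx) // -sqrtrM ?(ltW dj) //.
have [pos_xy pos_jm] := (mulr_gt0 dx dy, mulr_gt0 dj dm).
by rewrite lef_pV2 ?posrE ?sqrtr_gt0 // ler_sqrt ?(ltW pos_xy).
Qed.

Lemma sum_canon_weight_gt0 (W : finType) (Ws : {set W}) Es ends lam :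
  0 < weight Ws Es ends D lam q p [ffun => false] ->
  0 < \sum_(k | canon D k) weight Ws Es ends D lam q p k.
Proof.
have c0 : canon D [ffun => false] by apply/canonP => e _; rewrite ffunE.
move=> w0; rewrite (bigD1 [ffun => false]) //= (lt_le_trans w0) // lerDl.
by apply: sumr_ge0 => k _; apply: weight_ge0.
Qed.

Theorem sdom_energy_pullback :
  sdom (Pbc Ws1 Es1 ends1 D lam1 q p) (Pbc Ws2 Es2 ends2 D lam2 q p).
Proof.
move=> A incA; rewrite /Pbc.
have bw_gt0 := bernoulli_weight_gt0 D hp0 hp1 [ffun => false].
have S1 : 0 < \sum_(k | canon D k) weight Ws1 Es1 ends1 D lam1 q p k.
  by apply: sum_canon_weight_gt0; rewrite weightE divr_gt0 ?sqrtr_gt0 ?det1_gt0.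
have S2 : 0 < \sum_(k | canon D k) weight Ws2 Es2 ends2 D lam2 q p k.
  by apply: sum_canon_weight_gt0; rewrite weightE divr_gt0 ?sqrtr_gt0 ?det2_gt0.
rewrite ler_pdivrMr // mulrAC ler_pdivlMr //.
exact: holley (weight_ge0 D hp0 hp1 Ws1 Es1 ends1 lam1 q)
  (weight_ge0 D hp0 hp1 Ws2 Es2 ends2 lam2 q) weight_lattice incA.
Qed.

End EnergyComparison.

Section GraphOperations.
Variables (R : rcfType) (V E : finType) (ends : E -> V * V).

Lemma adj_sym (Es : {set E}) : symmetric (adj Es ends).
Proof.
by move=> x y; apply/existsP/existsP => -[e /andP[eE h]]; exists e; rewrite eE orbC.
Qed.

Lemma cls_ends (F : {set E}) e : e \in F ->
  cls ends F (ends e).1 = cls ends F (ends e).2.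
Proof.
move=> eF; apply/setP => y; rewrite !inE.
apply: same_connect; first exact: sym_connect_sym (adj_sym F).
apply: connect1; apply/existsP; exists e.
by rewrite eF -surjective_pairing eqxx.
Qed.

Lemma wf_mgraphT : wf_mgraph [set: V] [set: E] ends.
Proof. by move=> e _; rewrite !inE. Qed.

Lemma wf_mgraph_contr (F : {set E}) :
  wf_mgraph (contr_vertices ends F) (~: F) (contr_ends ends F).
Proof. by move=> e _; rewrite /contr_ends /= !imset_f. Qed.

Lemma connect_map (T : finType) (r1 : rel V) (r2 : rel T) (h : V -> T) :
  (forall a b, r1 a b -> connect r2 (h a) (h b)) ->
  forall x y, connect r1 x y -> connect r2 (h x) (h y).
Proof.
move=> hr x y /connectP[s pth ->]; elim: s x pth => [|z s IH] x /=.
  by rewrite connect0.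
by move=> /andP[r1xz pth]; apply: connect_trans (hr _ _ r1xz) (IH _ pth).
Qed.

Lemma connected_contr (F : {set E}) :
  connected_mgraph [set: V] [set: E] ends ->
  connected_mgraph (contr_vertices ends F) (~: F) (contr_ends ends F).
Proof.
move=> [/set0Pn[v _] conn]; split.
  by apply/set0Pn; exists (cls ends F v); apply: imset_f.
move=> X Y /imsetP[x _ ->] /imsetP[y _ ->].
apply: (connect_map (r1 := adj [set: E] ends)); last by apply: conn; rewrite inE.
move=> a b /existsP[e /andP[_ he]].
case eF: (e \in F).
  by have := cls_ends eF; case/orP: he => /eqP -> /= ->; apply: connect0.
apply: connect1; apply/existsP; exists e; rewrite !inE eF /= /contr_ends.
by case/orP: he => /eqP -> /=; rewrite eqxx ?orbT.
Qed.

Lemma energy_subgraph_le (W : finType) (ends' : E -> W * W) (Es1 Es2 : {set E})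
    (c1 c2 : E -> R) (f : W -> R) :
  Es1 \subset Es2 -> {in Es1, forall e, c1 e <= c2 e} -> (forall e, 0 <= c2 e) ->
  energy Es1 ends' c1 f <= energy Es2 ends' c2 f.
Proof.
move=> sub hle h0; rewrite /energy (big_setID Es1 (A := Es2)) /= (setIidPr sub).
rewrite ler_wpDr ?sumr_ge0 // => [e _|]; first by rewrite mulr_ge0 ?sqr_ge0.
by apply: ler_sum => e eE; rewrite ler_wpM2r ?sqr_ge0 ?hle.
Qed.

(* Pulling a potential back along the contraction map costs no energy on the
   contracted edges, whose endpoints are identified. *)
Lemma energy_contr_le (F : {set E}) (c1 c2 : E -> R) (f : {set V} -> R) :
  {in ~: F, forall e, c1 e <= c2 e} ->
  energy [set: E] ends c1 (fun v => f (cls ends F v)) <=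
  energy (~: F) (contr_ends ends F) c2 f.
Proof.
move=> hle; rewrite /energy (big_setID (~: F) (A := [set: E])) /= setTI.
rewrite [X in _ + X]big1 ?addr0 => [|e]; last first.
  by rewrite !inE negbK andbT => eF; rewrite /grad /= (cls_ends eF) subrr expr0n mulr0.
by apply: ler_sum => e eE; rewrite ler_wpM2r ?sqr_ge0 ?hle.
Qed.

Lemma mix_le (q : R) (D : {set E}) (l1 l2 k1 k2 : {ffun E -> bool}) e : 1 <= q ->
  (e \in D -> k1 e ==> k2 e) -> (e \notin D -> l1 e ==> l2 e) ->
  mix D l1 k1 q e <= mix D l2 k2 q e.
Proof.
move=> hq hk hl; rewrite /mix /cval; case: (e \in D) in hk hl *.
  by move: (hk isT); case: (k1 e); case: (k2 e); rewrite //= lexx.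
by move: (hl isT); case: (l1 e); case: (l2 e); rewrite //= lexx.
Qed.

End GraphOperations.

Section Monotonicity.
Variables (R : rcfType) (V E : finType) (ends : E -> V * V) (q p : R).
Hypotheses (hq : 1 <= q) (hp0 : 0 < p) (hp1 : p < 1).

Lemma sdom_subnetwork (V1 V2 : {set V}) (E1 E2 D : {set E})
    (lam1 lam2 : {ffun E -> bool}) :
  wf_mgraph V1 E1 ends -> connected_mgraph V1 E1 ends ->
  wf_mgraph V2 E2 ends -> connected_mgraph V2 E2 ends ->
  E1 \subset E2 -> D \subset E1 -> {in E1 :\: D, forall e, lam1 e ==> lam2 e} ->
  sdom (Pbc V1 E1 ends D lam1 q p) (Pbc V2 E2 ends D lam2 q p).
Proof.
move=> wf1 conn1 wf2 conn2 E12 DE1 lam12.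
apply: sdom_energy_pullback (subset_trans DE1 E12) hq hp0 hp1 _ => //.
move=> k1 k2 k12 f; exists f => //.
apply: energy_subgraph_le => // [e eE1|e]; last exact/ltW/mix_gt0.
by apply: mix_le => // eD; apply: lam12; rewrite inE eD.
Qed.

Lemma sdom_contraction (F D : {set E}) (lam1 lam2 : {ffun E -> bool}) :
  connected_mgraph [set: V] [set: E] ends ->
  D \subset ~: F -> {in ~: F :\: D, forall e, lam1 e ==> lam2 e} ->
  sdom (Pbc [set: V] [set: E] ends D lam1 q p)
       (Pbc (contr_vertices ends F) (~: F) (contr_ends ends F) D lam2 q p).
Proof.
move=> conn DF lam12.
apply: sdom_energy_pullback (subsetT D) DF hq hp0 hp1 _;
  [exact: wf_mgraphT | exact: conn | exact: wf_mgraph_contr | exact: connected_contr |].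
move=> k1 k2 k12 f; exists (fun v => f (cls ends F v)) => //.
apply: energy_contr_le => e eF.
by apply: mix_le => // eD; apply: lam12; rewrite inE eD.
Qed.

End Monotonicity.

Theorem corollary4p9 (R : rcfType) (V E : finType) (ends : E -> V * V)
  (Hsimple : simple_graph ends)
  (Hconn : connected_mgraph [set: V] [set: E] ends)
  (V' : {set V}) (E' : {set E})
  (Hsub : wf_mgraph V' E' ends)
  (Hconn' : connected_mgraph V' E' ends)
  (F : {set E}) (q p : R) (hq : 1 <= q) (hp0 : 0 < p) (hp1 : p < 1)
  (lam1 lam2 : {ffun E -> bool}) (hlam : forall e, lam1 e ==> lam2 e) :
  [/\ sdom (Pfree V' E' ends q p) (Pbc [set: V] [set: E] ends E' lam1 q p),
      sdom (Pbc [set: V] [set: E] ends E' lam1 q p)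
           (Pbc [set: V] [set: E] ends E' lam2 q p),
      sdom (Pbc [set: V] [set: E] ends (~: F) lam2 q p)
           (Pfree (contr_vertices ends F) (~: F) (contr_ends ends F) q p),
      (forall (lam : {ffun E -> bool}) (E'' : {set E}), E'' \subset E' ->
         sdom (Pbc V' E' ends E'' lam q p) (Pbc [set: V] [set: E] ends E'' lam q p))
    & (forall (lam : {ffun E -> bool}) (E'' : {set E}), E'' :&: F = set0 ->
         sdom (Pbc [set: V] [set: E] ends E'' lam q p)
              (Pbc (contr_vertices ends F) (~: F) (contr_ends ends F) E'' lam q p))].
Proof.
have wfT := wf_mgraphT ends; have E'T := subsetT E'.
have sub := sdom_subnetwork hq hp0 hp1; have contr := sdom_contraction hq hp0 hp1.
split.
- by apply: sub => // e _; rewrite ffunE.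
- by apply: sub => // e _; apply: hlam.
- by apply: contr => // e; rewrite setDv inE.
- by move=> lam E'' E''E'; apply: sub => // e _; apply: implybb.
move=> lam E'' E''F; apply: contr => // [|e _]; last exact: implybb.
by rewrite -disjoints_subset -setI_eq0 E''F.
Qed.
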